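(* Let $S_m$ be the random walk below and $I$ the function below. Then for every integer $m>0$ and $x\in[0,1)$, $$\mathbb P\Big(\sup_{0\le k\le m}S_k\ge xm\Big)\le e^{-mI(x)},$$ in particular $\mathbb P(S_m\ge xm)\le e^{-mI(x)}$. Furthermore there is $\varepsilon>0$ with $I(x)\ge\varepsilon x^2$ for all $x\in[0,1)$, and consequently $\mathbb P(\sup_{0\le k\le m}S_k\ge xm)\le e^{-\varepsilon mx^2}$ and $\mathbb P(S_m\ge xm)\le e^{-\varepsilon mx^2}$ for all $x\ge0$.
   Context: $S_m=X^{(1)}+\dots+X^{(m)}$, $S_0=0$, with i.i.d. steps distributed as $X=X_1+X_2$, where $X_1,X_2$ are independent, $\mathbb P(X_1=0)=(\sqrt2-1)/\sqrt2$, $\mathbb P(X_1=1)=1/\sqrt2$, $\mathbb P(X_2=-k)=\sqrt2(\sqrt2-1)^{k+1}$ for $k=0,1,2,\dots$. For $x<1$, $$I(x)=(2-x)\log(\sqrt2+1)+(1-x)\log\Big(\frac{1-x}{1+\sqrt{1+(1-x)^2}}\Big)+\log\Big(\frac{x+\sqrt{1+(1-x)^2}}{2-x+\sqrt{1+(1-x)^2}}\Big).$$ *)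

From HB Require Import structures.
From mathcomp Require Import all_boot all_order all_algebra.
From mathcomp Require Import all_classical all_reals all_analysis.
Set Implicit Arguments. Unset Strict Implicit. Unset Printing Implicit Defensive.
Import Order.TTheory GRing.Theory Num.Theory.
Local Open Scope classical_set_scope.
Local Open Scope ring_scope.

Section Defs.
Variable R : realType.

Definition sqrt2 : R := Num.sqrt 2.

Definition pX1 (a : int) : R :=
  if a == 0 then (sqrt2 - 1) / sqrt2
  else if a == 1 then 1 / sqrt2 else 0.

Definition pX2 (b : int) : R :=
  if b <= 0 then sqrt2 * (sqrt2 - 1) ^+ (`|b|%N).+1 else 0.

(* law of X = X1 + X2 with X1, X2 independent: P(X = z) *)
Definition pX (z : int) : R := pX1 0 * pX2 z + pX1 1 * pX2 (z - 1).

Definition rateI (x : R) : R :=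
  let r := Num.sqrt (1 + (1 - x) ^+ 2) in
  (2 - x) * ln (sqrt2 + 1)
  + (1 - x) * ln ((1 - x) / (1 + r))
  + ln ((x + r) / (2 - x + r)).

(* the walk S_k = X^(0) + ... + X^(k-1) (steps indexed from 0) *)
Definition walk (T : Type) (X : nat -> T -> R) (k : nat) (t : T) : R :=
  \sum_(i < k) X i t.

(* Mutual independence of the whole
   sequence is expressed through the product rule for every initial segment
   and every family of measurable sets (taking B i = setT for unused indices
   recovers the product rule for any finite subfamily). *)
Definition iid_steps (d : measure_display) (T : measurableType d)
    (P : probability T R) (X : nat -> T -> R) : Prop :=
  (forall i, measurable_fun setT (X i)) /\
  (forall (n : nat) (B : nat -> set R), (forall i, measurable (B i)) ->
     P [set t | forall i, (i < n)%N -> X i t \in B i]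
     = (\prod_(i < n) P (X i @^-1` B i))%E) /\
  (forall (i : nat) (z : int), P (X i @^-1` [set (z%:~R : R)]) = (pX z)%:E).

Definition sup_event (T : Type) (X : nat -> T -> R) (m : nat) (x : R) : set T :=
  [set t | exists k, (k <= m)%N /\ x * m%:R <= walk X k t].

Definition end_event (T : Type) (X : nat -> T -> R) (m : nat) (x : R) : set T :=
  [set t | x * m%:R <= walk X m t].

End Defs.

(* The steps take the value 1 - j with probability q for j = 0 and 2 q^(j+1)
   for j >= 1, where q = sqrt 2 - 1.  Up to the event that one of the first m
   steps is not among the N largest values, which has probability at most
   m (1 - q) q^N, the walk runs on a finite tree of paths.  Stopping each path
   when it reaches a = x m, the weight exp(lam (S - a)) mgf(e^lam)^(m - k) is a
   supermartingale along the tree, whence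
   P(sup_k S_k >= a) <= exp(-lam a) mgf(e^lam)^m.  At the saddle point
   T = e^lam = q (1 + sqrt(1 + (1-x)^2)) / (1 - x) the exponent is exactly I(x),
   and at this T the bounds ln z <= z - 1 and ln T <= (T - 1/T) / 2 give
   I(x) >= x^2 / 20.  The case x = 1 uses T = 1/q, and for x > 1 no path of
   length m reaches x m. *)

From HB Require Import structures.
From mathcomp Require Import all_boot all_order all_algebra.
From mathcomp Require Import all_classical all_reals all_analysis.
From mathcomp Require Import ring lra.
Set Implicit Arguments. Unset Strict Implicit. Unset Printing Implicit Defensive.
Import Order.TTheory GRing.Theory Num.Theory.
Import numFieldNormedType.Exports.
Local Open Scope classical_set_scope.
Local Open Scope ring_scope.

Section Sqrt2m1.
Variable R : realType.

Definition sqrt2m1 : R := sqrt2 R - 1.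
Local Notation q := sqrt2m1.

Lemma sqr_sqrt2 : sqrt2 R ^+ 2 = 2.
Proof. by rewrite sqr_sqrtr // ler0n. Qed.

Lemma sqrt2m1_sqr : q ^+ 2 = 1 - 2 * q.
Proof. by have := sqr_sqrt2; rewrite /q; nra. Qed.

Lemma sqrt2m1_bounds : 41/100 <= q <= 42/100.
Proof.
have := sqr_sqrt2; have : 0 <= sqrt2 R by exact: sqrtr_ge0.
by rewrite /q => ? ?; apply/andP; split; nra.
Qed.

Lemma sqrt2m1_gt0 : 0 < q.
Proof. by case/andP: sqrt2m1_bounds => ? _; lra. Qed.

Lemma sqrt2m1_lt1 : q < 1.
Proof. by case/andP: sqrt2m1_bounds => _ ?; lra. Qed.

Lemma ln_sqrt2D1 : ln (sqrt2 R + 1) = - ln q.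
Proof.
have q0 : q != 0 by rewrite gt_eqF // sqrt2m1_gt0.
have h : q * (sqrt2 R + 1) = 1 by have := sqr_sqrt2; rewrite /q; nra.
by rewrite -[sqrt2 R + 1](mulKf q0) h mulr1 lnV // posrE sqrt2m1_gt0.
Qed.

End Sqrt2m1.

Section ExpLn.
Variable R : realType.

Lemma expR_ge_quadratic (x : R) : 0 <= x -> 1 + x + x ^+ 2 / 2 <= expR x.
Proof.
move=> x0; rewrite /expR.
(* The exponential series dominates its truncation [f] after degree 2. *)
pose f i := (i < 3)%N%:R * exp_coeff x i.
have F m : (2 < m)%N -> \sum_(0 <= i < m) f i = 1 + x + x ^+ 2 / 2.
  move=> m2; rewrite (@big_cat_nat _ _ _ 3) //= [X in _ + X]big_nat_cond [X in _ + X]big1.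
    rewrite !big_nat_recl // big_geq // /f !exp_coeffE /= !mul1r.
    by rewrite !factS fact0 !muln1 invr1 expr0 expr1; field.
  by move=> i /andP[/andP[i3 _] _]; rewrite /f ltnNge i3 mul0r.
rewrite [leLHS](_ : _ = limn (series f)); last first.
  by apply/esym/(@lim_near_cst R^o) => //; near=> k; apply: F; near: k.
apply: ler_lim; first by apply: is_cvg_near_cst; near=> k; apply: F; near: k.
  exact: is_cvg_series_exp_coeff.
near=> k; apply: ler_sum => i _; rewrite /f; case: ltnP => _; rewrite ?mul1r ?mul0r //.
by rewrite exp_coeffE /= mulr_ge0 // ?invr_ge0 ?exprn_ge0.
Unshelve. all: by end_near. Qed.

Lemma ln_le_sinh (T : R) : 1 <= T -> ln T <= (T - T^-1) / 2.
Proof.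
move=> T1; have T0 : 0 < T by lra.
have v0 : 0 <= ln T by exact: ln_ge0.
have := expR_ge_quadratic v0; rewrite lnK ?posrE //.
set A := 1 + _ + _ => AT.
have A1 : 1 <= A by rewrite /A; nra.
have : T^-1 <= A^-1 by rewrite lef_pV2 ?posrE //; lra.
have : 2 * ln T <= A - A^-1.
  have -> : A - A^-1 = (A ^+ 2 - 1) / A by field; lra.
  by rewrite ler_pdivlMr /A; nra.
lra.
Qed.

End ExpLn.

Section StepLaw.
Variable R : realType.
Local Notation q := (sqrt2m1 R).

Definition step_val (j : nat) : R := 1 - j%:R.

Definition step_prob (j : nat) : R := if j is j'.+1 then 2 * q ^+ j'.+2 else q.

(* [mgf T] is E[T^X] = q T + \sum_(j >= 1) 2 q^(j+1) T^(1-j), summed in closed form. *)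
Definition mgf (T : R) : R := q * T * (T + q) / (T - q).

Lemma step_valE j : step_val j = (1 - j%:Z)%:~R.
Proof. by rewrite intrB. Qed.

Lemma step_val_le1 j : step_val j <= 1.
Proof. by rewrite /step_val gerBl. Qed.

Lemma step_val_inj : injective step_val.
Proof. by move=> i j /addrI/oppr_inj/eqP; rewrite eqr_nat => /eqP. Qed.

Lemma pX_step j : pX R (1 - j%:Z) = step_prob j.
Proof.
have s2n : sqrt2 R != 0 by rewrite -sqrf_eq0 sqr_sqrt2.
rewrite /pX /pX1 /pX2 /step_prob -/q.
case: j => [|j]; first by rewrite /= subnn expr1; field.
have -> : (1 - j.+1%:Z = - j%:Z)%R by rewrite -addn1 PoszD opprD addrCA subrr addr0.
have -> : (- j%:Z - 1 = - j.+1%:Z)%R by rewrite -addn1 PoszD opprD.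
by rewrite !oppr_le0 /= !abszN !absz_nat !exprS; field.
Qed.

Lemma step_prob_ge0 j : 0 <= step_prob j.
Proof.
have q0 := ltW (sqrt2m1_gt0 R).
by case: j => [|j] //=; rewrite mulr_ge0 ?exprn_ge0.
Qed.

Lemma sum_step_prob N : \sum_(j < N.+1) step_prob j = 1 - (1 - q) * q ^+ N.
Proof.
elim: N => [|N IH]; first by rewrite big_ord1 /= expr0 mulr1; ring.
rewrite big_ord_recr /= IH (exprS q N) -[q ^+ N.+2]/(q ^+ (2 + N)) exprD.
by rewrite [in RHS]mulrA [(1 - q) * q]mulrBl mul1r -expr2 sqrt2m1_sqr; ring.
Qed.

Lemma sum_step_prob_le1 N : \sum_(j < N) step_prob j <= 1.
Proof.
case: N => [|N]; first by rewrite big_ord0 ler01.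
have q0 := sqrt2m1_gt0 R; have q1 := sqrt2m1_lt1 R.
by rewrite sum_step_prob gerBl mulr_ge0 ?exprn_ge0 ?ltW // subr_gt0.
Qed.

Lemma mgf_ge1 T : 1 <= T -> 1 <= mgf T.
Proof.
move=> T1; have /andP[q41 q42] := sqrt2m1_bounds R.
have Tq : 0 < T - q by lra.
have -> : mgf T = 1 + q * (T - 1) ^+ 2 / (T - q) + (q ^+ 2 + 2 * q - 1) * T / (T - q).
  by rewrite /mgf; field; rewrite gt_eqF.
rewrite sqrt2m1_sqr subrK subrr !mul0r addr0.
by rewrite lerDl divr_ge0 ?mulr_ge0 ?sqr_ge0 //; lra.
Qed.

Lemma sum_step_prob_expR (lam : R) N : 0 <= lam ->
  \sum_(j < N) step_prob j * expR (lam * step_val j) <= mgf (expR lam).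
Proof.
move=> lam0; set T := expR lam.
have T1 : 1 <= T by rewrite /T -expR0 ler_expR.
have /andP[q41 q42] := sqrt2m1_bounds R.
have Tq : 0 < T - q by lra.
have Tn n : T ^+ n != 0 by rewrite expf_neq0 // gt_eqF //; lra.
set K := 2 * q ^+ 2 * T / (T - q).
have sumE n : \sum_(j < n.+1) step_prob j * expR (lam * step_val j) =
    mgf T - K * (q ^+ n / T ^+ n).
  have eV j : expR (lam * step_val j) = T / T ^+ j.
    by rewrite /step_val mulrBr mulr1 expRB expRM_natr.
  elim: n => [|n IH].
    by rewrite big_ord1 eV /mgf /K /=; field; rewrite !gt_eqF //; lra.
  rewrite big_ord_recr /= IH eV /K /mgf !exprS.
  by field; rewrite Tn !gt_eqF //; lra.
case: N => [|N]; first by rewrite big_ord0; have := mgf_ge1 T1; lra.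
by rewrite sumE gerBl mulr_ge0 ?divr_ge0 ?mulr_ge0 ?exprn_ge0 //; lra.
Qed.

Lemma mgf_sqrt2m1V : mgf q^-1 = 1 + q.
Proof.
have /andP[q41 q42] := sqrt2m1_bounds R.
apply/eqP; rewrite -subr_eq0; apply/eqP.
have -> : mgf q^-1 - (1 + q) = q * (q ^+ 2 + 2 * q - 1) / (1 - q ^+ 2).
  by rewrite /mgf; field; rewrite !gt_eqF //; nra.
by rewrite sqrt2m1_sqr subrK subrr mulr0 mul0r.
Qed.

End StepLaw.

Arguments step_val {R} j.
Arguments step_prob {R} j.
Arguments mgf {R} T.

Section FinitePaths.
Variables (R : realType) (p v : nat -> R).

Fixpoint paths (N m : nat) : seq (seq nat) :=
  if m is m'.+1 then [seq j :: z | j <- index_iota 0 N, z <- paths N m']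
  else [:: [::]].

Definition weight (z : seq nat) : R := \prod_(j <- z) p j.

Fixpoint hits (a s : R) (z : seq nat) : bool :=
  (a <= s) || (if z is j :: z' then hits a (s + v j) z' else false).

Lemma big_pathsS N m (P : pred (seq nat)) (F : seq nat -> R) :
  \sum_(z <- paths N m.+1 | P z) F z =
  \sum_(j < N) \sum_(z <- paths N m | P ((j : nat) :: z)) F ((j : nat) :: z).
Proof.
rewrite /= big_mkcond big_allpairs_dep /= big_mkord.
by apply: eq_bigr => j _; rewrite [RHS]big_mkcond.
Qed.

Lemma mem_paths N m (Q : nat -> nat -> Prop) :
  (forall i, (i < m)%N -> exists2 j, (j < N)%N & Q i j) ->
  exists2 z, z \in paths N m & forall i, (i < m)%N -> Q i (nth 0%N z i).
Proof.
elim: m Q => [|m IH] Q hQ; first by exists [::].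
have [z zP Qz] := IH (fun i => Q i.+1) (fun i => hQ i.+1).
have [j jN Qj] := hQ 0%N isT.
exists (j :: z); last by case.
by apply/allpairsPdep; exists j, z; rewrite mem_index_iota.
Qed.

Lemma size_paths N m z : z \in paths N m -> size z = m.
Proof.
elim: m z => [|m IH] z; first by rewrite inE => /eqP ->.
by case/allpairsPdep => j [z' [_ /IH <- ->]].
Qed.

Lemma hits_partial_sum a s z k : (k <= size z)%N ->
  a <= s + \sum_(i < k) v (nth 0%N z i) -> hits a s z.
Proof.
elim: z s k => [|j z IH] s [|k] //= hk.
- by rewrite big_ord0 addr0 orbF.
- by rewrite big_ord0 addr0 => ->.
- by rewrite big_ord_recl /= addrA => /(IH _ _ hk) ->; rewrite orbT.
Qed.

Lemma hits_le_size a s z : (forall j, v j <= 1) -> hits a s z -> a <= s + (size z)%:R.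
Proof.
move=> v1; elim: z s => [|j z IH] s /=; first by rewrite orbF addr0.
case/orP => [as_|/IH]; first by rewrite (le_trans as_) // lerDl.
by have := v1 j; rewrite mulrS; lra.
Qed.

Lemma sum_hits_eq0 N m a s : (forall j, v j <= 1) -> s + m%:R < a ->
  \sum_(z <- paths N m | hits a s z) weight z = 0.
Proof.
move=> v1 sa; rewrite big1_seq // => z /andP[/(hits_le_size v1) + /size_paths zm].
by rewrite zm leNgt sa.
Qed.

Hypothesis p_ge0 : forall j, 0 <= p j.

Lemma weight_cons j z : weight (j :: z) = p j * weight z.
Proof. exact: big_cons. Qed.

Lemma sum_weight_le1 N m (P : pred (seq nat)) : \sum_(j < N) p j <= 1 ->
  \sum_(z <- paths N m | P z) weight z <= 1.
Proof.
move=> pN; elim: m P => [|m IH] P.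
  by rewrite /= big_cons big_nil addr0; case: ifP; rewrite ?ler01 // /weight big_nil.
rewrite big_pathsS; apply: le_trans pN; apply: ler_sum => j _.
under eq_bigr do rewrite weight_cons.
by rewrite -mulr_sumr ler_piMr.
Qed.

(* Optional stopping on the tree of paths: a path is stopped when it reaches [a],
   where the bound is at least 1 and so dominates the total weight below it. *)
Lemma chernoff_paths N (lam phi a : R) m s :
  \sum_(j < N) p j <= 1 -> 0 <= lam -> 1 <= phi ->
  \sum_(j < N) p j * expR (lam * v j) <= phi ->
  \sum_(z <- paths N m | hits a s z) weight z <= expR (lam * (s - a)) * phi ^+ m.
Proof.
move=> pN lam0 phi1 mgfN.
have phim k : 0 <= phi ^+ k by rewrite exprn_ge0 // (le_trans ler01).
have stopped k s' : a <= s' ->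
    \sum_(z <- paths N k | hits a s' z) weight z <= expR (lam * (s' - a)) * phi ^+ k.
  move=> as'; apply: le_trans (sum_weight_le1 _ _ pN) _.
  by rewrite -[1]mulr1 ler_pM // ?exprn_ege1 // -expR0 ler_expR mulr_ge0 // subr_ge0.
elim: m s => [|m IH] s; have [/stopped //|sa] := leP a s.
  by rewrite big_mkcond big_seq1 /= orbF (lt_geF sa) mulr_ge0 ?expR_ge0.
have step (j : nat) : \sum_(z <- paths N m | hits a s (j :: z)) weight (j :: z) =
    p j * \sum_(z <- paths N m | hits a (s + v j) z) weight z.
  rewrite mulr_sumr; apply: eq_big => [z|z _]; last exact: weight_cons.
  by rewrite /= (lt_geF sa).
rewrite big_pathsS (eq_bigr _ (fun (j : 'I_N) _ => step j)).
apply: le_trans (_ : \sum_(j < N) p j * (expR (lam * (s + v j - a)) * phi ^+ m) <= _).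
  by apply: ler_sum => j _; rewrite ler_wpM2l.
have -> : \sum_(j < N) p j * (expR (lam * (s + v j - a)) * phi ^+ m) =
    expR (lam * (s - a)) * phi ^+ m * \sum_(j < N) p j * expR (lam * v j).
  rewrite mulr_sumr; apply: eq_bigr => j _.
  by rewrite (_ : lam * (s + v j - a) = lam * (s - a) + lam * v j) ?expRD; ring.
by rewrite exprSr mulrA ler_wpM2l // mulr_ge0 ?expR_ge0.
Qed.

End FinitePaths.

Arguments weight {R} p z.
Arguments hits {R} v a s z.

Lemma measure_bigsetU_seq_le {d : measure_display} {R : realType} {T : measurableType d}
    (mu : {measure set T -> \bar R}) {I : Type} (s : seq I) (P : pred I) (F : I -> set T) :
  (forall i, P i -> measurable (F i)) ->
  (mu (\big[setU/set0]_(i <- s | P i) F i) <= \sum_(i <- s | P i) mu (F i))%E.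
Proof.
move=> mF; elim: s => [|i s IH]; first by rewrite !big_nil measure0.
rewrite !big_cons; case: ifP => // Pi.
apply: le_trans (measureU2 _ _ _) (leeD _ IH) => //; first exact: mF.
exact: bigsetU_measurable.
Qed.

Lemma lee_fin_geometric (R : realType) (u : \bar R) (B c r : R) : 0 <= r < 1 ->
  (forall N, (u <= (B + c * r ^+ N)%:E)%E) -> (u <= B%:E)%E.
Proof.
move=> /andP[r0 r1] hu; apply/lee_addgt0Pr => e e0.
have /cvgr0_norm_lt/(_ e e0) [N _ hN] : c * r ^+ n @[n --> \oo] --> (0 : R).
  by rewrite -(mulr0 c); apply: cvgMl_tmp; apply: cvg_expr; rewrite ger0_norm.
apply: le_trans (hu N) _; rewrite lee_fin lerD2l.
exact: le_trans (ler_norm _) (ltW (hN N (leqnn N))).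
Qed.

Section WalkProbability.
Variables (R : realType) (d : measure_display) (T : measurableType d).
Variables (P : probability T R) (X : nat -> T -> R).
Hypothesis hX : iid_steps P X.
Local Notation q := (sqrt2m1 R).

Lemma measurable_preimage_X i (B : set R) : measurable B -> measurable (X i @^-1` B).
Proof. by case: hX => mX _ mB; rewrite -[A in measurable A]setTI; exact: mX. Qed.

Lemma P_step_val i j : P (X i @^-1` [set step_val j]) = (step_prob j)%:E.
Proof. by case: hX => _ [_ lawX]; rewrite step_valE lawX pX_step. Qed.

Definition cylinder (z : seq nat) : set T :=
  [set t | forall i, (i < size z)%N -> X i t \in [set step_val (nth 0%N z i)]].

Lemma measurable_cylinder z : measurable (cylinder z).
Proof.
have -> : cylinder z = \bigcap_(i in `I_(size z)) X i @^-1` [set step_val (nth 0%N z i)].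
  by apply/seteqP; split => t h i im; [exact/set_mem/h | exact/mem_set/h].
apply: bigcap_measurableType => i _.
by apply: measurable_preimage_X; exact: measurable_set1.
Qed.

Lemma P_cylinder z : P (cylinder z) = (weight step_prob z)%:E.
Proof.
case: hX => _ [prodX _]; rewrite prodX => [|i]; last exact: measurable_set1.
rewrite /weight (big_nth 0%N) big_mkord -prodEFin.
by apply: eq_bigr => i _; rewrite P_step_val.
Qed.

Definition step_vals (N : nat) : set R := \bigcup_(j in `I_N) [set step_val j].

Lemma P_step_vals i N : P (X i @^-1` step_vals N) = (\sum_(j < N) step_prob j)%:E.
Proof.
rewrite preimage_bigcup bigcup_mkord measure_bigsetU_ord => [|j|].
- by rewrite -sumEFin; apply: eq_bigr => j _; exact: P_step_val.
- by apply: measurable_preimage_X; exact: measurable_set1.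
apply/trivIsetP => j k _ _ jk; apply/seteqP; split => t //= [-> /step_val_inj/val_inj/eqP].
by rewrite (negbTE jk).
Qed.

Definition escape (N m : nat) : set T := \big[setU/set0]_(i < m) (X i @^-1` ~` step_vals N).

Lemma measurable_escape N m : measurable (escape N m).
Proof.
apply: bigsetU_measurable => i _; rewrite -preimage_setC.
apply/measurableC/measurable_preimage_X.
by apply: bigcup_measurable => j _; exact: measurable_set1.
Qed.

Lemma P_escape N m : (P (escape N.+1 m) <= (m%:R * ((1 - q) * q ^+ N))%:E)%E.
Proof.
have mvals i : measurable (X i @^-1` step_vals N.+1).
  by apply/measurable_preimage_X/bigcup_measurable => j _; exact: measurable_set1.
apply: le_trans (measure_bigsetU_seq_le P _ _) _ => [i _|].
  by rewrite -preimage_setC; exact: measurableC.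
rewrite (eq_bigr (fun=> ((1 - q) * q ^+ N)%:E)) => [|i _].
  by rewrite sumEFin sumr_const card_ord mulr_natl.
rewrite -preimage_setC; apply: eq_trans (probability_setC P (mvals i)) _.
by rewrite P_step_vals sum_step_prob -EFinB subKr.
Qed.

Lemma measurable_walk_ge k (a : R) : measurable [set t | a <= walk X k t].
Proof.
have mwalk : measurable_fun setT (walk X k).
  by apply: measurable_sum => i; case: hX.
have := mwalk measurableT _ (measurable_itv `[a, +oo[).
by rewrite setTI; congr measurable; apply/seteqP; split => t /=; rewrite in_itv /= andbT.
Qed.

Lemma measurable_sup_event m x : measurable (sup_event X m x).
Proof.
have -> : sup_event X m x =
    \bigcup_(k in [set k | (k <= m)%N]) [set t | x * m%:R <= walk X k t].
  by apply/seteqP; split => t /= [k]; [case=> km h | move=> km h]; exists k.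
by apply: bigcup_measurable => k _; exact: measurable_walk_ge.
Qed.

Lemma sup_event_cover N m x : sup_event X m x `<=` escape N m `|`
  \big[setU/set0]_(z <- paths N m | hits step_val (x * m%:R) 0 z) cylinder z.
Proof.
move=> t [k [km hk]]; have [esc|nesc] := pselect (escape N m t); [by left | right].
have [z zP hz] : exists2 z, z \in paths N m &
    forall i, (i < m)%N -> step_val (nth 0%N z i) = X i t.
  apply: (mem_paths (Q := fun i j => step_val j = X i t)) => i im.
  apply: contrapT => hn; apply: nesc.
  rewrite /escape -(bigcup_mkord m (fun i => X i @^-1` ~` step_vals N)).
  by exists i => // -[j jN hj]; apply: hn; exists j.
have hit : hits step_val (x * m%:R) 0 z.
  apply: (@hits_partial_sum _ _ _ _ _ k); first by rewrite (size_paths zP).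
  suff -> : \sum_(i < k) step_val (nth 0%N z i) = walk X k t by rewrite add0r.
  by apply: eq_bigr => i _; rewrite hz // (leq_trans (ltn_ord i)).
rewrite -bigcup_seq_cond; exists z; first by rewrite /= zP hit.
by move=> i; rewrite (size_paths zP) => im; apply/mem_set; rewrite /= hz.
Qed.

Lemma P_sup_event_le m x (B : R) :
  (forall N,
    \sum_(z <- paths N m | hits step_val (x * m%:R) 0 z) weight step_prob z <= B) ->
  (P (sup_event X m x) <= B%:E)%E.
Proof.
move=> hB; have /andP[q41 q42] := sqrt2m1_bounds R.
apply: (@lee_fin_geometric _ _ _ (m%:R * (1 - q)) q) => [|N].
  by apply/andP; split; lra.
pose U := \big[setU/set0]_(z <- paths N.+1 m | hits step_val (x * m%:R) 0 z) cylinder z.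
have mU : measurable U by apply: bigsetU_measurable => z _; exact: measurable_cylinder.
apply: (@le_trans _ _ (P (escape N.+1 m `|` U))).
  apply: le_measure; rewrite ?inE; last exact: sup_event_cover.
  - exact: measurable_sup_event.
  - exact: measurableU (measurable_escape _ _) mU.
apply: le_trans (measureU2 _ (measurable_escape _ _) mU) _.
rewrite -mulrA [B + _]addrC EFinD; apply: leeD; first exact: P_escape.
apply: le_trans (measure_bigsetU_seq_le P _ _) _ => [z _|].
  exact: measurable_cylinder.
rewrite (eq_bigr (fun z => (weight step_prob z)%:E)) => [|z _]; last exact: P_cylinder.
by rewrite sumEFin lee_fin.
Qed.

Lemma P_sup_event_chernoff m x lam : 0 <= lam ->
  (P (sup_event X m x) <= (expR (- (lam * (x * m%:R))) * mgf (expR lam) ^+ m)%:E)%E.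
Proof.
move=> lam0; apply: P_sup_event_le => N.
rewrite (_ : - (lam * (x * m%:R)) = lam * (0 - x * m%:R)); last by ring.
apply: chernoff_paths => //.
- exact: step_prob_ge0.
- exact: sum_step_prob_le1.
- by apply: mgf_ge1; rewrite -expR0 ler_expR.
- exact: sum_step_prob_expR.
Qed.

Lemma P_sup_event_gt1 m x : (0 < m)%N -> 1 < x -> P (sup_event X m x) = 0%E.
Proof.
move=> m0 x1; apply/eqP; rewrite eq_le measure_ge0 andbT.
apply: P_sup_event_le => N; rewrite sum_hits_eq0 //; first exact: step_val_le1.
have m0R : 0 < m%:R :> R by rewrite ltr0n.
nra.
Qed.

Lemma P_end_event_le_sup m x : (P (end_event X m x) <= P (sup_event X m x))%E.
Proof.
apply: le_measure; rewrite ?inE; last by move=> t h; exists m.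
- exact: measurable_walk_ge.
- exact: measurable_sup_event.
Qed.

End WalkProbability.

Section RateFunction.
Variable R : realType.
Local Notation q := (sqrt2m1 R).

(* [T] is the saddle point of [x ln T - ln (mgf T)]: the middle condition says
   [x = T (ln mgf)'(T)]. *)
Lemma rateI_saddle (x : R) : 0 <= x -> x < 1 -> exists T, [/\ 1 <= T,
  (1 - x) * (T ^+ 2 - q ^+ 2) = 2 * T * q & rateI x = x * ln T - ln (mgf T)].
Proof.
move=> x0 x1; set y := 1 - x; have y0 : 0 < y by rewrite subr_gt0.
set r := Num.sqrt (1 + y ^+ 2).
have r2 : r ^+ 2 = 1 + y ^+ 2 by rewrite sqr_sqrtr // addr_ge0 ?sqr_ge0.
have r0 : 0 <= r := sqrtr_ge0 _.
have /andP[q41 q42] := sqrt2m1_bounds R.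
exists (q * (1 + r) / y); set T := q * (1 + r) / y.
have Ty : T * y = q * (1 + r) by rewrite /T divfK // gt_eqF.
have key : y * (T ^+ 2 - q ^+ 2) = 2 * T * q.
  apply: (mulfI (lt0r_neq0 y0)).
  have -> : y * (y * (T ^+ 2 - q ^+ 2)) = (T * y) ^+ 2 - y ^+ 2 * q ^+ 2 by ring.
  have -> : y * (2 * T * q) = 2 * q * (T * y) by ring.
  rewrite Ty; transitivity (q ^+ 2 * (r ^+ 2 - 1 - y ^+ 2) + 2 * q * (q * (1 + r))).
    by ring.
  by rewrite r2; ring.
have T0 : 0 < T by rewrite /T divr_gt0 // mulr_gt0 //; lra.
have T1 : 1 <= T.
  have D0 : 0 < T ^+ 2 - q ^+ 2 by rewrite -(pmulr_rgt0 (T ^+ 2 - q ^+ 2) y0) key; nra.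
  have y1 : y <= 1 by rewrite /y gerBl.
  have : 2 * T * q <= T ^+ 2 - q ^+ 2 by rewrite -key; nra.
  by have := sqrt2m1_sqr R; nra.
split => //.
have Tq : 0 < T - q by lra.
rewrite /rateI -/y -/r ln_sqrt2D1 /mgf.
have -> : y / (1 + r) = q / T by rewrite /T; field; rewrite !gt_eqF //; lra.
have -> : (x + r) / (2 - x + r) = (T - q) / (T + q).
  by rewrite /T /y; field; rewrite !gt_eqF //; nra.
clearbody T; rewrite !ln_div ?lnM ?posrE ?mulr_gt0 ?divr_gt0 //; try lra.
by rewrite /y; ring.
Qed.

Lemma saddle_sqr_bound (x T : R) : 1 <= T -> (1 - x) * (T ^+ 2 - q ^+ 2) = 2 * T * q ->
  x ^+ 2 / 20 <= q ^+ 2 * (T - 1) ^+ 2 / (T ^+ 2 - q ^+ 2).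
Proof.
move=> T1 key; have /andP[q41 q42] := sqrt2m1_bounds R; have hq := sqrt2m1_sqr R.
set D := T ^+ 2 - q ^+ 2 in key *; have D0 : 0 < D by rewrite /D; nra.
have xD : x * D = (T - 1) * (T + q ^+ 2).
  by rewrite -[x](subrK 1) -opprB mulrDl mulNr key mul1r /D hq; ring.
have main : (T + q ^+ 2) ^+ 2 <= 20 * q ^+ 2 * D by rewrite /D hq; nra.
have : (x * D) ^+ 2 <= 20 * q ^+ 2 * (T - 1) ^+ 2 * D.
  by rewrite xD exprMn; have := sqr_ge0 (T - 1); nra.
have -> : x ^+ 2 / 20 = (x * D) ^+ 2 / (20 * D ^+ 2) by field; rewrite gt_eqF.
have -> : q ^+ 2 * (T - 1) ^+ 2 / D = 20 * q ^+ 2 * (T - 1) ^+ 2 * D / (20 * D ^+ 2).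
  by field; rewrite gt_eqF.
by move=> h; rewrite ler_pM2r // invr_gt0 mulr_gt0 // exprn_gt0.
Qed.

Lemma rateI_ge_sqr (x : R) : 0 <= x -> x < 1 -> x ^+ 2 / 20 <= rateI x.
Proof.
move=> x0 x1; have [T [T1 key ->]] := rateI_saddle x0 x1.
have /andP[q41 q42] := sqrt2m1_bounds R; have hq := sqrt2m1_sqr R.
have Tq : 0 < T - q by lra.
have D0 : 0 < T ^+ 2 - q ^+ 2 by nra.
have M0 : 0 < mgf T / T by rewrite divr_gt0 //; have := mgf_ge1 T1; lra.
have -> : x * ln T - ln (mgf T) = - ln (mgf T / T) - (1 - x) * ln T.
  by rewrite [ln (mgf T / T)]ln_div ?posrE; [ring | have := mgf_ge1 T1; lra | lra].
have ln_mgf : 1 - mgf T / T <= - ln (mgf T / T).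
  by have := @le_ln1Dx R (mgf T / T - 1); rewrite addrCA subrr addr0; lra.
have ln_T : (1 - x) * ln T <= (1 - x) * ((T - T^-1) / 2).
  by rewrite ler_wpM2l ?subr_ge0 ?ln_le_sinh // ltW.
have ey : 1 - x = 2 * T * q / (T ^+ 2 - q ^+ 2) by rewrite -key mulfK // gt_eqF.
have e : 1 - mgf T / T - (1 - x) * ((T - T^-1) / 2) =
    q ^+ 2 * (T - 1) ^+ 2 / (T ^+ 2 - q ^+ 2)
    + (1 - 2 * q - q ^+ 2) * (T ^+ 2 + q) / (T ^+ 2 - q ^+ 2).
  by rewrite ey /mgf; field; rewrite !gt_eqF //; lra.
have e0 : 1 - 2 * q - q ^+ 2 = 0 by rewrite hq subrr.
rewrite e0 !mul0r addr0 in e.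
have := saddle_sqr_bound T1 key; lra.
Qed.

End RateFunction.

Section TailBounds.
Variables (R : realType) (d : measure_display) (T : measurableType d).
Variables (P : probability T R) (X : nat -> T -> R).
Hypothesis hX : iid_steps P X.
Local Notation q := (sqrt2m1 R).

Lemma P_sup_event_le_rate m x : 0 <= x -> x < 1 ->
  (P (sup_event X m x) <= (expR (- (m%:R * rateI x)))%:E)%E.
Proof.
move=> x0 x1; have [S [S1 _ ->]] := rateI_saddle x0 x1.
have S0 : 0 < S by lra.
have M0 : 0 < mgf S by have := mgf_ge1 S1; lra.
apply: le_trans (P_sup_event_chernoff hX m x (ln_ge0 S1)) _.
have -> : - (m%:R * (x * ln S - ln (mgf S))) = - (ln S * (x * m%:R)) + m%:R * ln (mgf S).
  by ring.
by rewrite expRD expRM_natl !lnK ?posrE.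
Qed.

Lemma P_sup_event_le1 m : (P (sup_event X m 1) <= ((1 - q) ^+ m)%:E)%E.
Proof.
have /andP[q41 q42] := sqrt2m1_bounds R.
have lam0 : 0 <= - ln q by rewrite oppr_ge0 ln_le0 //; lra.
apply: le_trans (P_sup_event_chernoff hX m 1 lam0) _.
rewrite expRN lnK ?posrE; last lra.
rewrite mgf_sqrt2m1V mul1r mulNr opprK expRM_natr lnK ?posrE; last lra.
by rewrite -exprMn mulrDr mulr1 -expr2 sqrt2m1_sqr (_ : q + (1 - 2 * q) = 1 - q) //; ring.
Qed.

Lemma P_sup_event_le_sqr m x : (0 < m)%N -> 0 <= x ->
  (P (sup_event X m x) <= (expR (- (1 / 20 * m%:R * x ^+ 2)))%:E)%E.
Proof.
move=> m0 x0; have [x1|x1|->] := ltgtP x 1.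
- apply: le_trans (P_sup_event_le_rate m x0 x1) _; rewrite lee_fin ler_expR lerN2.
  by have := rateI_ge_sqr x0 x1; have := ler0n R m; nra.
- by rewrite P_sup_event_gt1 // lee_fin expR_ge0.
apply: le_trans (P_sup_event_le1 m) _; rewrite lee_fin.
have /andP[q41 q42] := sqrt2m1_bounds R.
rewrite expr1n mulr1 -mulNr expRM_natr lerXn2r ?nnegrE ?expR_ge0 //; first lra.
by apply: le_trans (expR_ge1Dx _); lra.
Qed.

End TailBounds.

Theorem proposition2p3 (R : realType) :
  (forall (d : measure_display) (T : measurableType d) (P : probability T R)
      (X : nat -> T -> R), iid_steps P X ->
   forall (m : nat) (x : R), (0 < m)%N -> 0 <= x -> x < 1 ->
     (P (sup_event X m x) <= (expR (- (m%:R * rateI x)))%:E)%E /\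
     (P (end_event X m x) <= (expR (- (m%:R * rateI x)))%:E)%E)
  /\
  exists eps : R, 0 < eps /\
    (forall x : R, 0 <= x -> x < 1 -> eps * x ^+ 2 <= rateI x) /\
    (forall (d : measure_display) (T : measurableType d) (P : probability T R)
        (X : nat -> T -> R), iid_steps P X ->
     forall (m : nat) (x : R), (0 < m)%N -> 0 <= x ->
       (P (sup_event X m x) <= (expR (- (eps * m%:R * x ^+ 2)))%:E)%E /\
       (P (end_event X m x) <= (expR (- (eps * m%:R * x ^+ 2)))%:E)%E).
Proof.
split=> [d T P X hX m x _ x0 x1|].
  have sup := P_sup_event_le_rate hX m x0 x1.
  by split=> //; exact: le_trans (P_end_event_le_sup hX m x) sup.
exists (1 / 20); split; first by rewrite divr_gt0.
split=> [x x0 x1|d T P X hX m x m0 x0]; first by have := rateI_ge_sqr x0 x1; lra.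
have sup := P_sup_event_le_sqr hX m0 x0.
by split=> //; exact: le_trans (P_end_event_le_sup hX m x) sup.
Qed.
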